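(* Let $R$ be a commutative Noetherian ring, $M$ a finitely generated $R$-module, and $X \subseteq \mathrm{Spec}(R)$ a basic set. For any subset $S \subseteq M$ there exists a finite set of primes $\Lambda \subseteq X$ such that for every $\mathfrak{p} \in X \setminus \Lambda$ there exists $\mathfrak{q} \in \Lambda$ with $\mathfrak{q} \subsetneq \mathfrak{p}$ and $\delta_\mathfrak{p}(S,M) = \delta_\mathfrak{q}(S,M)$.
   Context: A subset $X \subseteq \mathrm{Spec}(R)$ is basic if, whenever the intersection of a family of primes in $X$ is a prime ideal, that intersection belongs to $X$. For $S \subseteq M$ let $\langle S \rangle$ be the $R$-submodule generated by $S$. For a prime $\mathfrak{p}$, $\delta_\mathfrak{p}(S,M)$ is the largest integer $n \ge 0$ such that there is a free $R_\mathfrak{p}$-submodule $G \subseteq \langle S\rangle_\mathfrak{p}$ of rank $n$ which is a direct summand of $M_\mathfrak{p}$. *)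

From HB Require Import structures.
From mathcomp Require Import all_boot all_order all_algebra.
From mathcomp Require Import boolp classical_sets cardinality.
Set Implicit Arguments. Unset Strict Implicit. Unset Printing Implicit Defensive.
Import GRing.Theory.
Local Open Scope classical_set_scope.
Local Open Scope ring_scope.

(* Localizations R_p and M_p are represented by fractions (pairs
   numerator/denominator) with denominators outside p, together with the usual
   equivalence relation; all localized notions are stated up to that relation. *)

Section CommAlg.
Variables (R : comPzRingType) (M : lmodType R).

Definition ideal (I : set R) : Prop :=
  [/\ I 0, (forall x y, I x -> I y -> I (x + y)) & (forall a x, I x -> I (a * x))].

Definition prime_ideal (p : set R) : Prop :=
  [/\ ideal p, ~ p 1 & (forall a b, p (a * b) -> p a \/ p b)].

Definition noetherian : Prop :=
  forall I : set R, ideal I ->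
    exists s : seq R, (forall x, x \in s -> I x) /\
      (forall x, I x <-> exists c : 'I_(size s) -> R, x = \sum_(i < size s) c i * s`_i).

Definition fin_gen_module : Prop :=
  exists s : seq M, forall m : M,
    exists c : 'I_(size s) -> R, m = \sum_(i < size s) c i *: s`_i.

Definition gen_submod (S : set M) : set M :=
  [set m | exists l : seq (R * M), (forall x, x \in l -> S x.2) /\
             m = \sum_(x <- l) x.1 *: x.2].

Definition basic (X : set (set R)) : Prop :=
  forall F : set (set R), F `<=` X ->
    prime_ideal (\bigcap_(q in F) q) -> X (\bigcap_(q in F) q).

(* elements of M_p: pairs (m, s) with s \notin p; of R_p: pairs (a, t) with t \notin p *)
Definition locM_eq (p : set R) (x y : M * R) : Prop :=
  exists u, ~ p u /\ u *: (y.2 *: x.1 - x.2 *: y.1) = 0.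
Definition locR_eq (p : set R) (a b : R * R) : Prop :=
  exists u, ~ p u /\ u * (b.2 * a.1 - a.2 * b.1) = 0.
Definition loc_add (x y : M * R) : M * R := (y.2 *: x.1 + x.2 *: y.1, x.2 * y.2).
Definition loc_scale (a : R * R) (x : M * R) : M * R := (a.1 *: x.1, a.2 * x.2).
Definition loc_zero : M * R := (0, 1).

Definition loc_submod (p : set R) (N : set (M * R)) : Prop :=
  [/\ (forall x, N x -> ~ p x.2),
      (forall x y, N x -> ~ p y.2 -> locM_eq p x y -> N y),
      N loc_zero,
      (forall x y, N x -> N y -> N (loc_add x y)) &
      (forall a x, ~ p a.2 -> N x -> N (loc_scale a x))].

Definition loc_of (p : set R) (S : set M) : set (M * R) :=
  [set x | ~ p x.2 /\ exists m s, gen_submod S m /\ ~ p s /\ locM_eq p x (m, s)].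

Definition loc_comb (n : nat) (a : 'I_n -> R * R) (g : 'I_n -> M * R) : M * R :=
  \big[loc_add/loc_zero]_(i < n) loc_scale (a i) (g i).

Definition loc_free_rank (p : set R) (G : set (M * R)) (n : nat) : Prop :=
  loc_submod p G /\
  exists g : 'I_n -> M * R,
    (forall i, G (g i)) /\
    (forall x, G x <-> (~ p x.2 /\ exists a : 'I_n -> R * R,
        (forall i, ~ p (a i).2) /\ locM_eq p x (loc_comb a g))) /\
    (forall a : 'I_n -> R * R, (forall i, ~ p (a i).2) ->
        locM_eq p (loc_comb a g) loc_zero -> forall i, locR_eq p (a i) (0, 1)).

Definition loc_direct_summand (p : set R) (G : set (M * R)) : Prop :=
  exists N : set (M * R), loc_submod p N /\
    (forall x, G x -> N x -> locM_eq p x loc_zero) /\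
    (forall x, ~ p x.2 -> exists y z, G y /\ N z /\ locM_eq p x (loc_add y z)).

Definition delta_prop (p : set R) (S : set M) (n : nat) : Prop :=
  exists G : set (M * R), loc_free_rank p G n /\ G `<=` loc_of p S /\
    loc_direct_summand p G.

Definition delta (p : set R) (S : set M) : nat :=
  xget 0%N [set n | delta_prop p S n /\ forall m, delta_prop p S m -> (m <= n)%N].

End CommAlg.

(* Everything rests on a determinant description of [delta]: [delta_p(S, M) >= n] iff there
   are h_1, ..., h_n in <S> and a linear map psi : M -> R^n with det (psi h_j) outside p.
   Given such data, M_p is the direct sum of the free module on the h_j / 1 and of the
   kernel of psi_p.  Conversely, from a free direct summand G of rank n and a complement N one
   reads off psi on generators of M modulo N; the relations among the generators are killed
   in R_p, and since R is Noetherian a single element outside p kills them all.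
   As n is bounded by the number of generators of M, finitely many determinants give, for a
   prime q, some f outside q such that delta_p = delta_q for every prime p containing q but
   not f.  Noetherian induction on J then covers the primes of X containing J: their
   intersection K is either prime, hence in X because X is basic, and one splits along f,
   or K contains a product a b with a, b outside K, and one splits along a and b. *)

From HB Require Import structures.
From mathcomp Require Import all_boot all_order all_algebra.
From mathcomp Require Import boolp classical_sets cardinality.
From mathcomp Require Import ring.
Set Implicit Arguments. Unset Strict Implicit. Unset Printing Implicit Defensive.
Import GRing.Theory.
Local Open Scope classical_set_scope.
Local Open Scope ring_scope.

Section PrimeIdeal.
Variables (R : comPzRingType) (p : set R).
Hypothesis p_prime : prime_ideal p.

Lemma prime_ideal0 : p 0. Proof. by case: p_prime => -[]. Qed.

Lemma prime_ideal1 : ~ p 1. Proof. by case: p_prime. Qed.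

Lemma prime_idealMn (a b : R) : ~ p a -> ~ p b -> ~ p (a * b).
Proof. by case: p_prime => _ _ H na nb /H []. Qed.

Lemma prime_idealMl (a b : R) : p b -> p (a * b).
Proof. by case: p_prime => -[_ _ H] _ _; apply: H. Qed.

Lemma prime_ideal_prodn (I : Type) (r : seq I) (P : pred I) (F : I -> R) :
  (forall i, P i -> ~ p (F i)) -> ~ p (\prod_(i <- r | P i) F i).
Proof. exact: (big_ind (fun t => ~ p t) prime_ideal1 prime_idealMn). Qed.

Lemma prime_idealXn (a : R) n : ~ p a -> ~ p (a ^+ n).
Proof. by move=> pa; rewrite -(subn0 n) -prodr_const_nat; apply: prime_ideal_prodn. Qed.

(* [loc_null v] says that [v / 1] is zero in the localization [V_p]. *)
Definition loc_null (V : lmodType R) (v : V) := exists u, ~ p u /\ u *: v = 0.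

Lemma loc_null0 (V : lmodType R) : loc_null (0 : V).
Proof. by exists 1; split; [exact: prime_ideal1 | rewrite scaler0]. Qed.

Lemma loc_nullD (V : lmodType R) (v w : V) : loc_null v -> loc_null w -> loc_null (v + w).
Proof.
move=> [u [nu hu]] [u' [nu' hu']]; exists (u * u'); split; first exact: prime_idealMn.
by rewrite scalerDr [u * u']mulrC -scalerA hu scaler0 add0r mulrC -scalerA hu' scaler0.
Qed.

Lemma loc_nullZ (V : lmodType R) r (v : V) : loc_null v -> loc_null (r *: v).
Proof. by move=> [u [nu hu]]; exists u; rewrite scalerA mulrC -scalerA hu scaler0. Qed.

Lemma loc_nullN (V : lmodType R) (v : V) : loc_null v -> loc_null (- v).
Proof. by move=> /(loc_nullZ (-1)); rewrite scaleN1r. Qed.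

Lemma loc_nullB (V : lmodType R) (v w : V) : loc_null v -> loc_null w -> loc_null (v - w).
Proof. by move=> hv /loc_nullN; apply: loc_nullD. Qed.

Lemma loc_null_cancel (V : lmodType R) s (v : V) : ~ p s -> loc_null (s *: v) -> loc_null v.
Proof.
by move=> ns [u [nu hu]]; exists (u * s); rewrite -scalerA; split => //; exact: prime_idealMn.
Qed.

Lemma loc_null_sum (V : lmodType R) (I : Type) (r : seq I) (P : pred I) (F : I -> V) :
  (forall i, P i -> loc_null (F i)) -> loc_null (\sum_(i <- r | P i) F i).
Proof. exact: (big_ind _ (loc_null0 V) (@loc_nullD V)). Qed.

Lemma loc_null_linear (V W : lmodType R) (f : {linear V -> W}) (v : V) :
  loc_null v -> loc_null (f v).
Proof. by move=> [u [nu hu]]; exists u; rewrite -linearZ hu linear0. Qed.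

Lemma loc_null_fin (V : lmodType R) (I : finType) (F : I -> V) :
  (forall i, loc_null (F i)) -> exists u, ~ p u /\ forall i, u *: F i = 0.
Proof.
move=> H; have [u hu] := choice H.
exists (\prod_i u i); split; first by apply: prime_ideal_prodn => i _; case: (hu i).
by move=> i; rewrite (bigD1 i) //= mulrC -scalerA; case: (hu i) => _ ->; rewrite scaler0.
Qed.

End PrimeIdeal.

Section Fractions.
Variables (R : comPzRingType) (M : lmodType R).
Implicit Types (x y z : M * R) (a c : R * R).

Lemma loc_addA : associative (@loc_add R M).
Proof.
move=> [x1 x2] [y1 y2] [w1 w2]; rewrite /loc_add /=; congr pair; last by rewrite mulrA.
rewrite !scalerDr !scalerA addrA; congr (_ + _ + _); congr (_ *: _); ring.
Qed.

Lemma loc_addC : commutative (@loc_add R M).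
Proof. by move=> [x1 x2] [y1 y2]; rewrite /loc_add /= addrC mulrC. Qed.

Lemma loc_add0 : left_id (loc_zero M) (@loc_add R M).
Proof. by move=> [x1 x2]; rewrite /loc_add /= scaler0 add0r scale1r mul1r. Qed.

HB.instance Definition _ := Monoid.isComLaw.Build (M * R)%type (loc_zero M) (@loc_add R M)
  loc_addA loc_addC loc_add0.

Lemma loc_scaleA a c x : loc_scale a (loc_scale c x) = loc_scale (a.1 * c.1, a.2 * c.2) x.
Proof. by rewrite /loc_scale /= scalerA mulrA. Qed.

Lemma loc_comb_den1 n (b : 'I_n -> R) (h : 'I_n -> M) :
  loc_comb (fun i => (b i, 1)) (fun i => (h i, 1)) = (\sum_i b i *: h i, 1).
Proof.
apply: (big_ind2 (fun X Y => X = (Y, 1))) => [//| X1 Y1 X2 Y2 -> -> |i _].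
  by rewrite /loc_add /= !scale1r mulr1.
by rewrite /loc_scale /= mulr1.
Qed.

Variable p : set R.
Hypothesis p_prime : prime_ideal p.
Local Notation "x ~= y" := (locM_eq p x y) (at level 70).

Lemma locM_eqE x y : x ~= y <-> loc_null p (y.2 *: x.1 - x.2 *: y.1).
Proof. by []. Qed.

Lemma locM_eq_refl x : x ~= x.
Proof. by apply/locM_eqE; rewrite subrr; apply: loc_null0. Qed.

Lemma locM_eq_sym x y : x ~= y -> y ~= x.
Proof. by move/locM_eqE/loc_nullN; rewrite opprB. Qed.

Lemma locM_eq_trans y x z : ~ p y.2 -> x ~= y -> y ~= z -> x ~= z.
Proof.
move=> ny /locM_eqE hxy /locM_eqE hyz; apply/locM_eqE.
apply: (loc_null_cancel p_prime ny).
have -> : y.2 *: (z.2 *: x.1 - x.2 *: z.1) =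
   z.2 *: (y.2 *: x.1 - x.2 *: y.1) + x.2 *: (z.2 *: y.1 - y.2 *: z.1).
  rewrite !scalerBr !scalerA [z.2 * x.2]mulrC addrA subrK.
  by congr (_ *: _ - _ *: _); ring.
by apply: (loc_nullD p_prime); apply: loc_nullZ.
Qed.

Lemma locM_eq_addl x x' y : x ~= x' -> loc_add x y ~= loc_add x' y.
Proof.
move/locM_eqE=> h; apply/locM_eqE; rewrite /loc_add /=.
have -> : (x'.2 * y.2) *: (y.2 *: x.1 + x.2 *: y.1) - (x.2 * y.2) *: (y.2 *: x'.1 + x'.2 *: y.1)
  = (y.2 * y.2) *: (x'.2 *: x.1 - x.2 *: x'.1).
  rewrite !scalerDr ?scalerBr !scalerN !scalerA opprD addrACA.
  have -> : x'.2 * y.2 * x.2 = x.2 * y.2 * x'.2 by ring.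
  by rewrite subrr addr0; congr (_ *: _ - _ *: _); ring.
exact: loc_nullZ.
Qed.

Lemma locM_eq_addr x y y' : y ~= y' -> loc_add x y ~= loc_add x y'.
Proof. by rewrite !(loc_addC x); apply: locM_eq_addl. Qed.

Lemma locM_eq_scale a x x' : x ~= x' -> loc_scale a x ~= loc_scale a x'.
Proof.
move/locM_eqE=> h; apply/locM_eqE; rewrite /loc_scale /=.
have -> : (a.2 * x'.2) *: (a.1 *: x.1) - (a.2 * x.2) *: (a.1 *: x'.1)
  = (a.2 * a.1) *: (x'.2 *: x.1 - x.2 *: x'.1).
  by rewrite !scalerBr !scalerA; congr (_ *: _ - _ *: _); ring.
exact: loc_nullZ.
Qed.

Lemma locM_eq_scaleDr c x y :
  loc_scale c (loc_add x y) ~= loc_add (loc_scale c x) (loc_scale c y).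
Proof.
apply/locM_eqE; rewrite /loc_scale /loc_add /=.
have -> : (c.2 * x.2 * (c.2 * y.2)) *: (c.1 *: (y.2 *: x.1 + x.2 *: y.1)) -
  (c.2 * (x.2 * y.2)) *: ((c.2 * y.2) *: (c.1 *: x.1) + (c.2 * x.2) *: (c.1 *: y.1)) = 0.
  rewrite !scalerDr !scalerA; apply/eqP; rewrite subr_eq0; apply/eqP.
  by congr (_ *: _ + _ *: _); ring.
exact: loc_null0.
Qed.

Definition loc_equiv x y := [/\ ~ p x.2, ~ p y.2 & x ~= y].

Lemma loc_equiv_refl x : ~ p x.2 -> loc_equiv x x.
Proof. by move=> n; split => //; apply: locM_eq_refl. Qed.

Lemma loc_equiv_trans y x z : loc_equiv x y -> loc_equiv y z -> loc_equiv x z.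
Proof. by case=> ? ny h1 [_ ? h2]; split => //; apply: (locM_eq_trans ny). Qed.

Lemma loc_equiv_add x x' y y' :
  loc_equiv x y -> loc_equiv x' y' -> loc_equiv (loc_add x x') (loc_add y y').
Proof.
case=> nx ny h [nx' ny' h']; split; try exact: prime_idealMn.
apply: (@locM_eq_trans (loc_add y x')); first exact: prime_idealMn.
  exact: locM_eq_addl.
exact: locM_eq_addr.
Qed.

Lemma loc_equiv_big n (F G : 'I_n -> M * R) : (forall i, loc_equiv (F i) (G i)) ->
  loc_equiv (\big[@loc_add R M/loc_zero M]_i F i) (\big[@loc_add R M/loc_zero M]_i G i).
Proof.
move=> H; apply: big_ind2 => //; last by move=> *; exact: loc_equiv_add.
exact/loc_equiv_refl/prime_ideal1.
Qed.

Lemma loc_equiv_scale c x y : ~ p c.2 -> loc_equiv x y ->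
  loc_equiv (loc_scale c x) (loc_scale c y).
Proof.
by move=> nc [nx ny h]; split; try exact: prime_idealMn; apply: locM_eq_scale.
Qed.

Lemma loc_equiv_scaleDr c x y : ~ p c.2 -> ~ p x.2 -> ~ p y.2 ->
  loc_equiv (loc_scale c (loc_add x y)) (loc_add (loc_scale c x) (loc_scale c y)).
Proof.
move=> nc nx ny; split; last exact: locM_eq_scaleDr.
  all: by rewrite /=; repeat apply: (prime_idealMn p_prime).
Qed.

Lemma loc_equiv_scale_big n c (F : 'I_n -> M * R) : ~ p c.2 -> (forall i, ~ p (F i).2) ->
  loc_equiv (loc_scale c (\big[@loc_add R M/loc_zero M]_i F i))
     (\big[@loc_add R M/loc_zero M]_i loc_scale c (F i)).
Proof.
move=> nc nF.
suff [] : ~ p (\big[@loc_add R M/loc_zero M]_i F i).2 /\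
    loc_equiv (loc_scale c (\big[@loc_add R M/loc_zero M]_i F i))
      (\big[@loc_add R M/loc_zero M]_i loc_scale c (F i)) by [].
apply: (big_ind2 (fun X Y => ~ p X.2 /\ loc_equiv (loc_scale c X) Y)) => //.
- split; first exact: prime_ideal1.
  split; [by rewrite /= mulr1 | exact: prime_ideal1 |].
  by apply/locM_eqE; rewrite /= !scaler0 subrr; exact: loc_null0.
- move=> X1 Y1 X2 Y2 [n1 h1] [n2 h2]; split; first exact: prime_idealMn.
  exact: (loc_equiv_trans (loc_equiv_scaleDr nc n1 n2) (loc_equiv_add h1 h2)).
- by move=> i _; split => //; apply: loc_equiv_refl; apply: prime_idealMn.
Qed.

Lemma loc_comb_den n (a : 'I_n -> R * R) (g : 'I_n -> M * R) :
  (forall i, ~ p (a i).2) -> (forall i, ~ p (g i).2) -> ~ p (loc_comb a g).2.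
Proof.
move=> na ng; apply: (big_ind (fun X : M * R => ~ p X.2)); first exact: prime_ideal1.
  by move=> X Y nX nY; apply: prime_idealMn.
by move=> i _; apply: prime_idealMn.
Qed.

Lemma loc_comb_clear_den n (a : 'I_n -> R * R) (h : 'I_n -> M) :
  (forall i, ~ p (a i).2) ->
  loc_equiv (loc_scale (\prod_i (a i).2, 1) (loc_comb a (fun i => (h i, 1))))
     (\sum_i ((a i).1 * \prod_(j | j != i) (a j).2) *: h i, 1).
Proof.
move=> na; rewrite -loc_comb_den1.
apply: (loc_equiv_trans (loc_equiv_scale_big _ _)); first exact: prime_ideal1.
  by move=> i; rewrite /= mulr1.
apply: loc_equiv_big => i; rewrite loc_scaleA /=.
split; rewrite /loc_scale /=; [by rewrite mul1r mulr1 | rewrite mulr1; exact: prime_ideal1 |].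
apply/locM_eqE; rewrite /= !mulr1 !mul1r scale1r scalerA (bigD1 i) //=.
have -> : (a i).2 * \prod_(j < n | j != i) (a j).2 * (a i).1 =
   (a i).2 * ((a i).1 * \prod_(j < n | j != i) (a j).2) by ring.
by rewrite subrr; exact: loc_null0.
Qed.

End Fractions.

Section GeneratedSubmodule.
Variables (R : comPzRingType) (M : lmodType R) (S : set M).

Lemma gen_submod0 : gen_submod S 0.
Proof. by exists [::]; rewrite big_nil. Qed.

Lemma gen_submodD m m' : gen_submod S m -> gen_submod S m' -> gen_submod S (m + m').
Proof.
move=> [l [hl ->]] [l' [hl' ->]]; exists (l ++ l'); split; last by rewrite big_cat.
by move=> x; rewrite mem_cat => /orP [/hl|/hl'].
Qed.

Lemma gen_submodZ r m : gen_submod S m -> gen_submod S (r *: m).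
Proof.
move=> [l [hl ->]]; exists [seq (r * x.1, x.2) | x <- l]; split.
  by move=> x /mapP [y /hl ? ->].
by rewrite big_map scaler_sumr; apply: eq_bigr => x _; rewrite scalerA.
Qed.

Lemma gen_submod_sum n (b : 'I_n -> R) (h : 'I_n -> M) : (forall j, gen_submod S (h j)) ->
  gen_submod S (\sum_j b j *: h j).
Proof.
move=> H; apply: (big_ind (gen_submod S)); [exact: gen_submod0 | exact: gen_submodD |].
by move=> j _; apply: gen_submodZ.
Qed.

End GeneratedSubmodule.

Definition det_certificate (R : comPzRingType) (M : lmodType R) (p : set R) (S : set M)
    (n : nat) :=
  exists h : 'I_n -> M, (forall j, gen_submod S (h j)) /\
    exists psi : {linear M -> 'rV[R]_n}, ~ p (\det (\matrix_(j < n) psi (h j))).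

Section CertificateSummand.
Variables (R : comPzRingType) (M : lmodType R) (p : set R) (S : set M) (n : nat).
Hypothesis p_prime : prime_ideal p.
Variables (h : 'I_n -> M) (psi : {linear M -> 'rV[R]_n}).
Hypothesis h_gen : forall j, gen_submod S (h j).
Hypothesis det_out : ~ p (\det (\matrix_(j < n) psi (h j))).

Local Notation A := (\matrix_(j < n) psi (h j)).
Local Notation h1 := (fun j => (h j, 1)).
Local Notation "x ~= y" := (locM_eq p x y) (at level 70).

Lemma psi_comb (c : 'rV[R]_n) : psi (\sum_j c 0 j *: h j) = c *m A.
Proof.
rewrite linear_sum mulmx_sum_row; apply: eq_bigr => j _.
by rewrite linearZZ rowK.
Qed.

(* Multiplying by the adjugate of [A] recovers [det A * b] from [psi (sum b_j h_j)]. *)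
Lemma cert_coord_null (b : 'I_n -> R) :
  loc_null p (psi (\sum_j b j *: h j)) -> forall j, loc_null p (b j : R^o).
Proof.
have -> : psi (\sum_j b j *: h j) = (\row_j b j) *m A.
  by rewrite -psi_comb; congr (psi _); apply: eq_bigr => j _; rewrite mxE.
move=> /(loc_null_linear (mulmxr (\adj A))) /=.
rewrite -mulmxA mul_mx_adj mul_mx_scalar => /(loc_null_cancel p_prime det_out) [u [nu hu]] j.
by exists u; split => //; have := congr1 (fun N : 'rV_n => N 0 j) hu; rewrite !mxE.
Qed.

Definition cert_free (x : M * R) := ~ p x.2 /\
  exists a : 'I_n -> R * R, (forall i, ~ p (a i).2) /\ x ~= loc_comb a h1.

Definition cert_kernel (x : M * R) := ~ p x.2 /\ loc_null p (psi x.1).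

Lemma loc_comb_h1_den (a : 'I_n -> R * R) : (forall i, ~ p (a i).2) -> ~ p (loc_comb a h1).2.
Proof. by move=> na; apply: loc_comb_den => // i; exact: prime_ideal1. Qed.

Lemma cert_freeD x y : cert_free x -> cert_free y -> cert_free (loc_add x y).
Proof.
move=> [nx [a [na hx]]] [ny [b [nb hy]]].
split; first exact: prime_idealMn.
pose ab i := ((b i).2 * (a i).1 + (a i).2 * (b i).1, (a i).2 * (b i).2).
exists ab; split; first by move=> i; apply: prime_idealMn.
have -> : loc_comb ab h1 = loc_add (loc_comb a h1) (loc_comb b h1).
  rewrite /loc_comb -big_split /=; apply: eq_bigr => i _.
  by rewrite /loc_add /loc_scale /= !mulr1 !scalerA scalerDl.
have Ex : loc_equiv p x (loc_comb a h1) by split => //; exact: loc_comb_h1_den.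
have Ey : loc_equiv p y (loc_comb b h1) by split => //; exact: loc_comb_h1_den.
by case: (loc_equiv_add p_prime Ex Ey).
Qed.

Lemma cert_freeZ c x : ~ p c.2 -> cert_free x -> cert_free (loc_scale c x).
Proof.
move=> nc [nx [a [na hx]]]; split; first exact: prime_idealMn.
exists (fun i => (c.1 * (a i).1, c.2 * (a i).2)); split.
  by move=> i; apply: prime_idealMn.
have E1 : loc_equiv p (loc_scale c x) (loc_scale c (loc_comb a h1)).
  by apply: loc_equiv_scale => //; split => //; apply: loc_comb_h1_den.
have E2 : loc_equiv p (loc_scale c (loc_comb a h1))
    (\big[@loc_add R M/loc_zero M]_i loc_scale c (loc_scale (a i) (h i, 1))).
  by apply: loc_equiv_scale_big => // i; rewrite /= mulr1.
by case: (loc_equiv_trans p_prime E1 E2); under eq_bigr do rewrite loc_scaleA.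
Qed.

Lemma cert_free_submod : loc_submod p cert_free.
Proof.
split; [by move=> x [] | | | exact: cert_freeD | exact: cert_freeZ].
  move=> x y [nx [a [na hx]]] ny hxy; split => //; exists a; split => //.
  exact: (locM_eq_trans p_prime nx (locM_eq_sym hxy) hx).
split; first exact: prime_ideal1.
exists (fun _ => (0, 1)); split; first by move=> ?; exact: prime_ideal1.
rewrite (loc_comb_den1 (fun _ => 0)) (_ : \sum_i _ = 0); first exact: locM_eq_refl.
by rewrite big1 // => i _; rewrite scale0r.
Qed.

Lemma cert_free_basis i : cert_free (h i, 1).
Proof.
split; first exact: prime_ideal1.
exists (fun j => ((j == i)%:R, 1)); split; first by move=> ?; exact: prime_ideal1.
rewrite (loc_comb_den1 (fun j => (j == i)%:R)) (bigD1 i) //= eqxx scale1r big1 ?addr0.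
  exact: locM_eq_refl.
by move=> j /negbTE ->; rewrite scale0r.
Qed.

Lemma cert_free_num x : cert_free x ->
  exists T (b : 'I_n -> R), ~ p T /\ x ~= (\sum_j b j *: h j, T).
Proof.
case=> nx [a [na hx]].
have [_ _ /locM_eqE E] := loc_comb_clear_den p_prime h na.
exists (\prod_i (a i).2), (fun i => (a i).1 * \prod_(j | j != i) (a j).2); split.
  exact: prime_ideal_prodn.
apply: (locM_eq_trans p_prime (loc_comb_h1_den na) hx); apply/locM_eqE.
by move: E; rewrite /= scale1r mul1r.
Qed.

Lemma cert_free_sub : (cert_free `<=` loc_of p S)%classic.
Proof.
move=> x Gx; split; first by case: Gx.
have [T [b [nT E]]] := cert_free_num Gx.
by exists (\sum_j b j *: h j), T; split => //; apply: gen_submod_sum.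
Qed.

Lemma cert_free_indep (a : 'I_n -> R * R) : (forall i, ~ p (a i).2) ->
  loc_comb a h1 ~= loc_zero M -> forall i, locR_eq p (a i) (0, 1).
Proof.
move=> na hC i.
have [_ _ E] := loc_comb_clear_den p_prime h na.
have /locM_eqE : (\sum_i ((a i).1 * \prod_(j | j != i) (a j).2) *: h i, 1) ~=
    loc_scale (\prod_i (a i).2, 1) (loc_zero M).
  apply: (locM_eq_trans p_prime _ (locM_eq_sym E)); last exact: locM_eq_scale.
  by rewrite /= mul1r; exact: loc_comb_h1_den.
rewrite /= !scaler0 mulr1 scale1r subr0 => /(loc_null_linear psi).
move=> /cert_coord_null /(_ i) [u [nu hu]].
exists (u * \prod_(j | j != i) (a j).2); split.
  by apply: prime_idealMn => //; apply: prime_ideal_prodn.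
have hu' : u * ((a i).1 * \prod_(j | j != i) (a j).2) = 0 := hu.
by rewrite /= mul1r mulr0 subr0 -[RHS]hu'; ring.
Qed.

Lemma cert_kernel_submod : loc_submod p cert_kernel.
Proof.
split.
- by move=> x [].
- move=> x y [nx hx] ny /locM_eqE /(loc_null_linear psi) hxy; split => //.
  apply: (loc_null_cancel p_prime nx).
  have -> : x.2 *: psi y.1 = y.2 *: psi x.1 - psi (y.2 *: x.1 - x.2 *: y.1).
    by rewrite [psi (_ - _)]linearB !(linearZZ psi) opprB addrC subrK.
  by apply: (loc_nullB p_prime) => //; apply: loc_nullZ.
- by split; [exact: prime_ideal1 | rewrite /= linear0; exact: loc_null0].
- move=> x y [nx hx] [ny hy]; split; first exact: prime_idealMn.
  by rewrite /= linearD !linearZZ; apply: (loc_nullD p_prime); apply: loc_nullZ.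
- move=> c x nc [nx hx]; split; first exact: prime_idealMn.
  by rewrite /= linearZZ; apply: loc_nullZ.
Qed.

Lemma cert_free_kernel x : cert_free x -> cert_kernel x -> x ~= loc_zero M.
Proof.
move=> Gx [nx hx]; have [T [b [nT /locM_eqE E]]] := cert_free_num Gx.
move: E => /=; set m := \sum_j b j *: h j => E.
have psim : loc_null p (psi m).
  apply: (loc_null_cancel p_prime nx).
  have -> : x.2 *: psi m = T *: psi x.1 - psi (T *: x.1 - x.2 *: m).
    by rewrite [psi (_ - _)]linearB !(linearZZ psi) opprB addrC subrK.
  by apply: (loc_nullB p_prime); [apply: loc_nullZ | exact: (loc_null_linear psi E)].
have Hm : loc_null p m.
  apply: (loc_null_sum p_prime) => j _; have [u [nu hu]] := cert_coord_null psim j.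
  by exists u; split => //; rewrite scalerA (hu : u * b j = 0) scale0r.
apply/locM_eqE; rewrite /= scaler0 subr0 scale1r; apply: (loc_null_cancel p_prime nT).
have -> : T *: x.1 = (T *: x.1 - x.2 *: m) + x.2 *: m by rewrite subrK.
by apply: (loc_nullD p_prime) => //; apply: loc_nullZ.
Qed.

(* [x] splits as [y + z] with [y := psi(x) adj(A) / (det A)] in the free part. *)
Lemma cert_free_kernel_cover x : ~ p x.2 ->
  exists y z, cert_free y /\ cert_kernel z /\ x ~= loc_add y z.
Proof.
move=> nx.
set c := psi x.1 *m \adj A; set d := \det A * x.2.
have nd : ~ p d by apply: prime_idealMn.
set y := loc_scale (1, d) (\sum_j c 0 j *: h j, 1).
have Gy : cert_free y.
  apply: cert_freeZ => //; rewrite -loc_comb_den1.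
  split; first by rewrite loc_comb_den1; exact: prime_ideal1.
  exists (fun j => (c 0 j, 1)); split; first by move=> ?; exact: prime_ideal1.
  exact: locM_eq_refl.
set z := loc_add x (loc_scale (-1, 1) y).
exists y, z; split => //; split.
  split; first by rewrite /= !mul1r mulr1; apply: prime_idealMn.
  have -> : z.1 = (1 * (d * 1)) *: x.1 + x.2 *: (-1 *: (1 *: \sum_j c 0 j *: h j)) by [].
  rewrite (linearD psi) !(linearZZ psi) psi_comb /c -mulmxA mul_adj_mx mul_mx_scalar.
  rewrite !scalerA mul1r mulr1 /d.
  have -> : x.2 * -1 * 1 * \det A = - (\det A * x.2) by ring.
  by rewrite scaleNr subrr; apply: loc_null0.
rewrite /z loc_addA (loc_addC y) -loc_addA.
have -> : loc_add y (loc_scale (-1, 1) y) = (0, y.2 * (1 * y.2)).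
  by rewrite /loc_add /loc_scale /= mul1r scaleN1r scalerN subrr.
by apply/locM_eqE; rewrite /= scaler0 addr0 scalerA mulrC subrr; apply: loc_null0.
Qed.

Lemma cert_delta_prop : delta_prop p S n.
Proof.
exists cert_free; split; last split.
- split; first exact: cert_free_submod.
  exists h1; split; first exact: cert_free_basis.
  by split; [move=> x | exact: cert_free_indep].
- exact: cert_free_sub.
- exists cert_kernel; split; first exact: cert_kernel_submod.
  by split; [exact: cert_free_kernel | exact: cert_free_kernel_cover].
Qed.

End CertificateSummand.

Lemma noetherian_loc_null_ideal (R : comPzRingType) (p : set R) (I : set R) :
  noetherian R -> prime_ideal p -> ideal I -> (forall r, I r -> loc_null p (r : R^o)) ->
  exists u, ~ p u /\ forall r, I r -> u * r = 0.
Proof.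
move=> R_noeth p_prime I_ideal I_null.
have [t [tI tgen]] := R_noeth I I_ideal.
have t_null (i : 'I_(size t)) : loc_null p (t`_i : R^o).
  by apply: I_null; apply: tI; exact: mem_nth.
have [u [nu ut]] := loc_null_fin p_prime t_null.
exists u; split => // r /tgen [c ->].
by rewrite mulr_sumr big1 // => i _; rewrite mulrCA (ut i : u * t`_i = 0) mulr0.
Qed.

Section SummandCertificate.
Variables (R : comPzRingType) (M : lmodType R) (p : set R) (n : nat).
Hypothesis p_prime : prime_ideal p.
Hypothesis R_noeth : noetherian R.
Local Notation "x ~= y" := (locM_eq p x y) (at level 70).

Variables (G : set (M * R)) (g : 'I_n -> M * R) (N : set (M * R)).
Hypothesis G_submod : loc_submod p G.
Hypothesis G_basis : forall i, G (g i).
Hypothesis G_span : forall x, G x <-> (~ p x.2 /\ exists a : 'I_n -> R * R,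
  (forall i, ~ p (a i).2) /\ x ~= loc_comb a g).
Hypothesis G_indep : forall a : 'I_n -> R * R, (forall i, ~ p (a i).2) ->
  loc_comb a g ~= loc_zero M -> forall i, locR_eq p (a i) (0, 1).
Hypothesis N_submod : loc_submod p N.
Hypothesis GN_trivial : forall x, G x -> N x -> x ~= loc_zero M.
Hypothesis GN_cover : forall x, ~ p x.2 -> exists y z, G y /\ N z /\ x ~= loc_add y z.
Variables (h : 'I_n -> M) (s : 'I_n -> R).
Hypothesis s_out : forall j, ~ p (s j).
Hypothesis g_frac : forall j, g j ~= (h j, s j).

Lemma g_den j : ~ p (g j).2.
Proof. by case: G_submod => G_den _ _ _ _; exact: G_den (G_basis j). Qed.

Definition Npre (m : M) := N (m, 1).

Lemma Npre0 : Npre 0.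
Proof. by case: N_submod. Qed.

Lemma NpreZ r m : Npre m -> Npre (r *: m).
Proof.
case: N_submod => _ _ _ _ NZ /(NZ (r, 1) _ (prime_ideal1 p_prime)).
by rewrite /loc_scale /= mulr1.
Qed.

Lemma NpreD m m' : Npre m -> Npre m' -> Npre (m + m').
Proof.
case: N_submod => _ _ _ ND _ Nm Nm'.
by have := ND _ _ Nm Nm'; rewrite /loc_add /= !scale1r mulr1.
Qed.

Lemma NpreB m m' : Npre m -> Npre m' -> Npre (m - m').
Proof. by move=> Nm Nm'; apply: NpreD => //; rewrite -scaleN1r; apply: NpreZ. Qed.

Lemma Npre_sum (I : Type) (r : seq I) (P : pred I) (F : I -> M) :
  (forall i, P i -> Npre (F i)) -> Npre (\sum_(i <- r | P i) F i).
Proof. exact: (big_ind _ Npre0 NpreD). Qed.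

Lemma Npre_num x : N x -> Npre x.1.
Proof.
case: N_submod => _ N_eq _ _ NZ Nx.
apply: (N_eq _ _ (NZ (x.2, 1) _ (prime_ideal1 p_prime) Nx)); first exact: (prime_ideal1 p_prime).
by apply/locM_eqE; rewrite /= mul1r scale1r subrr; exact: loc_null0.
Qed.

(* An element of [<h> \cap N] is zero in [M_p]; by independence of the [g j = h j / s j]
   its coefficients vanish in [R_p]. *)
Lemma Npre_comb_null (b : 'I_n -> R) : Npre (\sum_j b j *: h j) ->
  forall j, loc_null p (b j : R^o).
Proof.
move=> Nw; set w := (\sum_j b j *: h j, 1 : R).
have Ew : loc_equiv p w (loc_comb (fun j => (b j * s j, 1)) g).
  rewrite /w -(loc_comb_den1 b h); apply: (loc_equiv_big p_prime) => j.
  split; [by rewrite /= mulr1; exact: (prime_ideal1 p_prime) | by rewrite /= mul1r; exact: g_den |].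
  have /locM_eqE E := g_frac j; apply/locM_eqE; rewrite /= !scalerA !mul1r.
  have -> : (g j).2 * b j *: h j - (b j * s j) *: (g j).1 =
      b j *: ((g j).2 *: h j - s j *: (g j).1).
    by rewrite scalerBr !scalerA mulrC [b j * s j]mulrC.
  by apply: loc_nullZ; rewrite -opprB; apply: loc_nullN.
have Gw : G w.
  apply/G_span; split; first exact: (prime_ideal1 p_prime).
  exists (fun j => (b j * s j, 1)); split; first by move=> ?; exact: (prime_ideal1 p_prime).
  by case: Ew.
have C0 : loc_comb (fun j => (b j * s j, 1)) g ~= loc_zero M.
  apply: (locM_eq_trans p_prime (y := w)); first exact: (prime_ideal1 p_prime).
    by case: Ew => _ _ /locM_eq_sym.
  exact: GN_trivial.
move=> j; have [u [nu hu]] :=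
  @G_indep (fun j => (b j * s j, 1)) (fun _ => prime_ideal1 p_prime) C0 j.
apply: (@loc_null_cancel _ _ p_prime R^o (s j)) => //; exists u; split => //.
move: hu => /=; rewrite mul1r mulr0 subr0 => hu.
by change (u * (s j * b j) = 0); rewrite [s j * _]mulrC.
Qed.

Lemma Npre_coord_unique (T : R) m (b b' : 'I_n -> R) : Npre (T *: m - \sum_j b j *: h j) ->
  Npre (T *: m - \sum_j b' j *: h j) -> forall j, loc_null p ((b j - b' j) : R^o).
Proof.
move=> Nb Nb'; apply: Npre_comb_null.
have -> : \sum_j (b j - b' j) *: h j =
    (T *: m - \sum_j b' j *: h j) - (T *: m - \sum_j b j *: h j).
  rewrite opprB addrC addrA subrK -sumrB; apply: eq_bigr => j _; by rewrite scalerBl.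
exact: NpreB.
Qed.

Lemma G_num y : G y ->
  exists T (b : 'I_n -> R), ~ p T /\ loc_equiv p (loc_scale (T, 1) y) (\sum_j b j *: h j, 1).
Proof.
move=> Gy; have [ny [a [na Ey]]] := (G_span y).1 Gy.
pose a' j := ((a j).1, (a j).2 * s j).
have na' j : ~ p (a' j).2 by apply: (prime_idealMn p_prime).
exists (\prod_i (a' i).2), (fun i => (a' i).1 * \prod_(j | j != i) (a' j).2).
split; first exact: prime_ideal_prodn.
apply: (loc_equiv_trans p_prime _ (loc_comb_clear_den p_prime h na')).
have nT : ~ p (\prod_i (a' i).2, 1 : R).2 by exact: (prime_ideal1 p_prime).
apply: (loc_equiv_scale p_prime nT); apply: (@loc_equiv_trans _ _ _ p_prime (loc_comb a g)).
  by split => //; apply: loc_comb_den => //; exact: g_den.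
apply: (loc_equiv_big p_prime) => j.
have -> : loc_scale (a' j) (h j, 1) = loc_scale (a j) (h j, s j).
  by rewrite /loc_scale /= mulr1.
by apply: (loc_equiv_scale p_prime) => //; split; [exact: g_den | exact: s_out | exact: g_frac].
Qed.

(* Write [m / 1 = y + z] with [y \in G], [z \in N] and clear the denominators of [y]. *)
Lemma Npre_approx m : exists T (b : 'I_n -> R), ~ p T /\ Npre (T *: m - \sum_j b j *: h j).
Proof.
have [y [z [Gy [Nz E]]]] := GN_cover (x := (m, 1)) (prime_ideal1 p_prime).
have [T [b [nT Ey]]] := G_num Gy.
have [N_den _ _ _ NZ] := N_submod.
have ny : ~ p y.2 by case: G_submod => G_den _ _ _ _; exact: G_den.
set z' := loc_scale (T, 1) z.
have nz' : ~ p z'.2 by rewrite /z' /= mul1r; exact: N_den.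
have F : loc_equiv p (loc_scale (T, 1) (m, 1)) (loc_add (\sum_j b j *: h j, 1) z').
  have nT1 : ~ p (T, 1 : R).2 by exact: (prime_ideal1 p_prime).
  apply: (@loc_equiv_trans _ _ _ p_prime (loc_scale (T, 1) (loc_add y z))).
    apply: (loc_equiv_scale p_prime nT1); split; [exact: (prime_ideal1 p_prime) | | exact: E].
    by apply: (prime_idealMn p_prime) => //; exact: N_den.
  apply: (loc_equiv_trans p_prime (loc_equiv_scaleDr p_prime nT1 ny (N_den _ Nz))).
  by apply: (loc_equiv_add p_prime) => //; apply: loc_equiv_refl.
case: F => _ _ /locM_eqE [u [nu hu]].
exists (u * z'.2 * T), (fun j => u * z'.2 * b j); split.
  by apply: (prime_idealMn p_prime) => //; apply: (prime_idealMn p_prime).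
have -> : \sum_j (u * z'.2 * b j) *: h j = (u * z'.2) *: \sum_j b j *: h j.
  by rewrite scaler_sumr; apply: eq_bigr => j _; rewrite scalerA.
have -> : (u * z'.2 * T) *: m - (u * z'.2) *: \sum_j b j *: h j = u *: z'.1.
  apply/eqP; rewrite -subr_eq0; apply/eqP; rewrite -[RHS]hu.
  by rewrite /= !mul1r !scale1r scalerBr scalerDr !scalerA opprD addrA !mulrA.
by apply: NpreZ; apply: Npre_num; apply: NZ => //; exact: (prime_ideal1 p_prime).
Qed.

Variables (k : nat) (sg : 'I_k -> M) (rep : M -> 'I_k -> R).
Hypothesis rep_spec : forall m, m = \sum_l rep m l *: sg l.
Variables (T : 'I_k -> R) (b : 'I_k -> 'I_n -> R).
Hypothesis T_out : forall l, ~ p (T l).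
Hypothesis sg_approx : forall l, Npre (T l *: sg l - \sum_j b l j *: h j).

Definition den := \prod_l T l.
Definition coord l j := (\prod_(l' | l' != l) T l') * b l j.

Lemma den_out : ~ p den.
Proof. by apply: (prime_ideal_prodn p_prime) => l _; exact: T_out. Qed.

Lemma coord_approx l : Npre (den *: sg l - \sum_j coord l j *: h j).
Proof.
have -> : den *: sg l - \sum_j coord l j *: h j =
    (\prod_(l' | l' != l) T l') *: (T l *: sg l - \sum_j b l j *: h j).
  rewrite scalerBr scalerA scaler_sumr /den (bigD1 l) //= mulrC.
  by congr (_ - _); apply: eq_bigr => j _; rewrite scalerA.
exact: NpreZ.
Qed.

Lemma coord_comb_approx (c : 'I_k -> R) :
  Npre (den *: \sum_l c l *: sg l - \sum_j (\sum_l c l * coord l j) *: h j).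
Proof.
have -> : den *: \sum_l c l *: sg l - \sum_j (\sum_l c l * coord l j) *: h j =
    \sum_l c l *: (den *: sg l - \sum_j coord l j *: h j).
  rewrite scaler_sumr.
  under [X in _ - X]eq_bigr => j _ do rewrite scaler_suml.
  rewrite exchange_big /= -sumrB; apply: eq_bigr => l _.
  rewrite scalerBr scaler_sumr !scalerA mulrC; congr (_ - _).
  by apply: eq_bigr => j _; rewrite scalerA.
by apply: Npre_sum => l _; apply: NpreZ; apply: coord_approx.
Qed.

Definition relation (c : 'I_k -> R) := \sum_l c l *: sg l = 0.

Lemma relation_coord_null c : relation c ->
  forall j, loc_null p ((\sum_l c l * coord l j) : R^o).
Proof.
move=> c_rel j.
have Nc : Npre (den *: 0 - \sum_j (\sum_l c l * coord l j) *: h j).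
  by have := coord_comb_approx c; rewrite c_rel.
have N0 : Npre (den *: 0 - \sum_j (fun _ => 0 : R) j *: h j).
  by rewrite scaler0 big1 ?subr0 //; [exact: Npre0 | move=> j' _; rewrite scale0r].
by have := Npre_coord_unique Nc N0 j; rewrite subr0.
Qed.

Definition relation_ideal (r : R) := exists C : 'I_n -> 'I_k -> R,
  (forall j, relation (C j)) /\ r = \sum_j \sum_l C j l * coord l j.

Lemma relation_ideal_ideal : ideal relation_ideal.
Proof.
split.
- exists (fun _ _ => 0); split.
    by move=> j; rewrite /relation big1 // => l _; rewrite scale0r.
  by rewrite big1 // => j _; rewrite big1 // => l _; rewrite mul0r.
- move=> x y [C [C_rel ->]] [D [D_rel ->]]; exists (fun j l => C j l + D j l); split.
    move=> j; rewrite /relation (eq_bigr (fun l => C j l *: sg l + D j l *: sg l)).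
      by rewrite big_split /= C_rel D_rel addr0.
    by move=> l _; rewrite scalerDl.
  rewrite -big_split /=; apply: eq_bigr => j _; rewrite -big_split /=.
  by apply: eq_bigr => l _; rewrite mulrDl.
- move=> a x [C [C_rel ->]]; exists (fun j l => a * C j l); split.
    move=> j; rewrite /relation (eq_bigr (fun l => a *: (C j l *: sg l))).
      by rewrite -scaler_sumr C_rel scaler0.
    by move=> l _; rewrite scalerA.
  rewrite mulr_sumr; apply: eq_bigr => j _; rewrite mulr_sumr.
  by apply: eq_bigr => l _; rewrite mulrA.
Qed.

Lemma relation_ideal_null r : relation_ideal r -> loc_null p (r : R^o).
Proof.
move=> [C [C_rel ->]]; apply: (loc_null_sum p_prime) => j _.
exact: relation_coord_null.
Qed.

Lemma relation_annihilator : exists U, ~ p U /\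
  forall c, relation c -> forall j, U * \sum_l c l * coord l j = 0.
Proof.
have [U [nU U_ann]] := noetherian_loc_null_ideal R_noeth p_prime relation_ideal_ideal
  relation_ideal_null.
exists U; split => // c c_rel j; apply: U_ann.
exists (fun j' l => if j' == j then c l else 0); split.
  move=> j'; case: eqP => _ //.
  by rewrite /relation big1 // => l _; rewrite scale0r.
rewrite (bigD1 j) //= eqxx [X in _ = _ + X]big1 ?addr0 // => j' /negbTE ->.
by rewrite big1 // => l _; rewrite mul0r.
Qed.

Variable U : R.
Hypothesis U_out : ~ p U.
Hypothesis U_ann : forall c, relation c -> forall j, U * \sum_l c l * coord l j = 0.

(* [m] has many coordinates on the generators [sg], but [U] kills the discrepancy. *)
Definition cert_form (m : M) : 'rV[R]_n := \row_j (U * \sum_l rep m l * coord l j).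

Lemma cert_formE m (c : 'I_k -> R) : m = \sum_l c l *: sg l ->
  cert_form m = \row_j (U * \sum_l c l * coord l j).
Proof.
move=> m_c; apply/rowP => j; rewrite !mxE.
have c_rel : relation (fun l => rep m l - c l).
  rewrite /relation (eq_bigr (fun l => rep m l *: sg l - c l *: sg l)).
    by rewrite sumrB -rep_spec -m_c subrr.
  by move=> l _; rewrite scalerBl.
have := U_ann c_rel j.
rewrite (eq_bigr (fun l => rep m l * coord l j - c l * coord l j)).
  by rewrite sumrB mulrBr => /eqP; rewrite subr_eq0 => /eqP.
by move=> l _; rewrite mulrBl.
Qed.

Lemma cert_form_linear : linear cert_form.
Proof.
move=> r x y.
rewrite (@cert_formE _ (fun l => r * rep x l + rep y l)); last first.
  rewrite (eq_bigr (fun l => r *: (rep x l *: sg l) + rep y l *: sg l)).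
    by rewrite big_split /= -scaler_sumr -!rep_spec.
  by move=> l _; rewrite scalerDl scalerA.
apply/rowP => j; rewrite !mxE.
rewrite (eq_bigr (fun l => r * (rep x l * coord l j) + rep y l * coord l j)).
  by rewrite big_split /= -mulr_sumr; ring.
by move=> l _; ring.
Qed.

Lemma cert_form_h_null j0 j :
  loc_null p ((\sum_l rep (h j0) l * coord l j - den * (j == j0)%:R) : R^o).
Proof.
have N1 : Npre (den *: h j0 - \sum_j (\sum_l rep (h j0) l * coord l j) *: h j).
  by have := coord_comb_approx (rep (h j0)); rewrite -rep_spec.
have N2 : Npre (den *: h j0 - \sum_j (den * (j == j0)%:R) *: h j).
  have -> : \sum_j (den * (j == j0)%:R) *: h j = den *: h j0.
    rewrite (bigD1 j0) //= eqxx mulr1 big1 ?addr0 // => j' /negbTE ->.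
    by rewrite mulr0 scale0r.
  by rewrite subrr; exact: Npre0.
exact: (Npre_coord_unique N1 N2 j).
Qed.

(* Up to a unit of [R_p], the matrix of [cert_form] on the [h j] is [U * den]. *)
Lemma cert_form_det : ~ p (\det (\matrix_(j < n) cert_form (h j))).
Proof.
have [v hv] := choice (fun j0 => loc_null_fin p_prime (cert_form_h_null j0)).
set V := \prod_j0 v j0.
have nV : ~ p V by apply: (prime_ideal_prodn p_prime) => j0 _; case: (hv j0).
have EA : V *: (\matrix_(j < n) cert_form (h j)) = (V * U * den)%:M.
  apply/matrixP => j0 j; rewrite !mxE.
  have /eqP := (hv j0).2 j; rewrite /GRing.scale /= mulrBr subr_eq0 => /eqP e.
  rewrite /V (bigD1 j0) //=.
  rewrite (_ : v j0 * \prod_(i | i != j0) v i * (U * \sum_l rep (h j0) l * coord l j) =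
     \prod_(i | i != j0) v i * U * (v j0 * \sum_l rep (h j0) l * coord l j)); last by ring.
  rewrite e eq_sym; case: eqP => [->|_]; first by rewrite mulr1 mulr1n; ring.
  by rewrite !mulr0 mulr0n.
move=> pA; have := detZ V (\matrix_(j < n) cert_form (h j)); rewrite EA det_scalar.
have : ~ p ((V * U * den) ^+ n).
  apply: (prime_idealXn p_prime); apply: (prime_idealMn p_prime); last exact: den_out.
  exact: (prime_idealMn p_prime).
by move=> + e; rewrite e; apply; apply: (prime_idealMl p_prime).
Qed.

End SummandCertificate.

Lemma delta_prop_certificate (R : comPzRingType) (M : lmodType R) (p : set R) (S : set M) n :
  noetherian R -> fin_gen_module M -> prime_ideal p ->
  delta_prop p S n -> det_certificate p S n.
Proof.
move=> R_noeth [sg sg_gen] p_prime.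
move=> [G [[G_submod [g [G_basis [G_span G_indep]]]] [G_sub [N [N_submod [GN_trivial GN_cover]]]]]].
have g_num j : exists x : M * R, [/\ gen_submod S x.1, ~ p x.2 & locM_eq p (g j) x].
  by have [_ [m [s [Sm [ns E]]]]] := G_sub _ (G_basis j); exists (m, s).
have [hs hs_spec] := choice g_num.
pose h j := (hs j).1; pose s j := (hs j).2.
have s_out j : ~ p (s j) by case: (hs_spec j).
have g_frac j : locM_eq p (g j) (h j, s j) by case: (hs_spec j); rewrite /h /s; case: (hs j).
have [rep rep_spec] := choice sg_gen.
have [T [b sg_approx]] : exists (T : 'I_(size sg) -> R) (b : 'I_(size sg) -> 'I_n -> R),
    forall l, ~ p (T l) /\ Npre N (T l *: sg`_l - \sum_j b l j *: h j).
  have [Tb Tb_spec] := choice (fun l : 'I_(size sg) =>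
    Npre_approx p_prime G_submod G_basis G_span N_submod GN_cover s_out g_frac sg`_l).
  have [b b_spec] := choice (fun l => Tb_spec l).
  by exists Tb, b.
have [U [U_out U_ann]] := relation_annihilator p_prime R_noeth G_submod G_basis G_span G_indep
  N_submod GN_trivial s_out g_frac (fun l => (sg_approx l).2).
exists h; split; first by move=> j; case: (hs_spec j).
pose psi : {linear M -> 'rV[R]_n} :=
  HB.pack (cert_form rep T b U) (GRing.isLinear.Build _ _ _ _ _ (cert_form_linear rep_spec U_ann)).
exists psi.
exact: (cert_form_det p_prime G_submod G_basis G_span G_indep N_submod GN_trivial s_out g_frac
  rep_spec (fun l => (sg_approx l).1) (fun l => (sg_approx l).2) U_out).
Qed.

Lemma delta_propE (R : comPzRingType) (M : lmodType R) (p : set R) (S : set M) n :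
  noetherian R -> fin_gen_module M -> prime_ideal p ->
  delta_prop p S n <-> det_certificate p S n.
Proof.
move=> R_noeth M_fg p_prime; split; first exact: delta_prop_certificate.
by move=> [h [h_gen [psi det_out]]]; exact: (cert_delta_prop p_prime h_gen det_out).
Qed.

Lemma det_mulmx_small (R : comPzRingType) n K (C : 'M[R]_(n, K)) (B : 'M[R]_(K, n)) :
  (K < n)%N -> \det (C *m B) = 0.
Proof.
move=> Kn.
pose C' : 'M[R]_n := \matrix_(j, l) (if insub (val l) is Some l' then C j l' else 0).
pose B' : 'M[R]_n := \matrix_(l, i) (if insub (val l) is Some l' then B l' i else 0).
have -> : C *m B = C' *m B'.
  apply/matrixP => j i; rewrite !mxE.
  pose F m := if insub m is Some l' then C j l' * B l' i else 0.
  have -> : \sum_l C' j l * B' l i = \sum_(l < n) F l.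
    by apply: eq_bigr => l _; rewrite !mxE /F; case: insub => [l'|]; rewrite ?mul0r.
  have -> : \sum_l C j l * B l i = \sum_(l < K) F l.
    by apply: eq_bigr => l _; rewrite /F valK.
  rewrite -!(big_mkord xpredT F) [in RHS](big_cat_nat _ (n := K)) //=; last exact: ltnW.
  rewrite [X in _ = _ + X]big1_seq ?addr0 // => m /andP [_].
  by rewrite mem_index_iota => /andP [Km _]; rewrite /F insubF // ltnNge Km.
rewrite det_mulmx (expand_det_col _ (Ordinal Kn)) big1 ?mul0r // => j _.
by rewrite !mxE insubF ?mul0r //= ltnn.
Qed.

(* The matrix of a certificate factors through [R^K], [K] the number of generators of [M]. *)
Lemma det_certificate_bound (R : comPzRingType) (M : lmodType R) : fin_gen_module M ->
  exists K, forall (p : set R) (S : set M) n, prime_ideal p -> det_certificate p S n -> (n <= K)%N.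
Proof.
move=> [sg sg_gen]; have [rep rep_spec] := choice sg_gen.
exists (size sg) => p S n p_prime [h [h_gen [psi det_out]]].
rewrite leqNgt; apply/negP => Kn; apply: det_out.
pose C : 'M[R]_(n, size sg) := \matrix_(j, l) rep (h j) l.
pose B : 'M[R]_(size sg, n) := \matrix_(l, i) psi sg`_l 0 i.
have -> : \matrix_(j < n) psi (h j) = C *m B.
  apply/matrixP => j i; rewrite !mxE {1}(rep_spec (h j)) linear_sum summxE.
  by apply: eq_bigr => l _; rewrite linearZZ !mxE.
by rewrite det_mulmx_small //; apply: prime_ideal0.
Qed.

Section LocallyConstant.
Variables (R : comPzRingType) (M : lmodType R) (S : set M).
Hypotheses (R_noeth : noetherian R) (M_fg : fin_gen_module M).

Lemma det_certificate_sub (p q : set R) n :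
  q `<=` p -> det_certificate p S n -> det_certificate q S n.
Proof. by move=> qp [h [h_gen [psi det_out]]]; exists h; split => //; exists psi => /qp. Qed.

Lemma det_certificate_open (q : set R) n : prime_ideal q -> exists d, ~ q d /\
  (det_certificate q S n -> forall p : set R, ~ p d -> det_certificate p S n).
Proof.
move=> q_prime; have [[h [h_gen [psi det_out]]]|no_cert] := pselect (det_certificate q S n).
  exists (\det (\matrix_(j < n) psi (h j))); split => // _ p det_out_p.
  by exists h; split => //; exists psi.
by exists 1; split; [exact: prime_ideal1 | move=> /no_cert].
Qed.

Lemma delta_locally_constant (q : set R) : prime_ideal q -> exists f, ~ q f /\
  forall p, prime_ideal p -> ~ p f -> q `<=` p -> delta p S = delta q S.
Proof.
move=> q_prime; have [K cert_le] := det_certificate_bound M_fg.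
have [d d_spec] := choice (fun n => det_certificate_open n q_prime).
exists (\prod_(n < K.+1) d n); split.
  by apply: (prime_ideal_prodn q_prime) => n _; case: (d_spec n).
move=> p p_prime f_out qp; rewrite /delta.
suff -> : delta_prop p S = delta_prop q S by [].
apply: funext => n; apply: propext; rewrite !delta_propE //; split.
  exact: det_certificate_sub.
move=> q_cert; have [_ spread] := d_spec n; apply: (spread q_cert) => pd; apply: f_out.
have n_lt : (n < K.+1)%N by rewrite ltnS; exact: cert_le q_cert.
by rewrite (bigD1 (Ordinal n_lt)) //= mulrC; apply: (prime_idealMl p_prime).
Qed.

End LocallyConstant.

Section NoetherianInduction.
Variable R : comPzRingType.

Lemma ideal_sum (I : set R) n (c t : 'I_n -> R) :
  ideal I -> (forall i, I (t i)) -> I (\sum_i c i * t i).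
Proof. by move=> [I0 ID IM] It; apply: (big_ind I) => // i _; exact: IM. Qed.

Hypothesis R_noeth : noetherian R.

Lemma noetherian_chain (c : nat -> set R) : (forall k, ideal (c k)) ->
  (forall k, c k `<=` c k.+1) -> exists k, c k.+1 `<=` c k.
Proof.
move=> c_ideal c_incr.
have c_mono k l : (k <= l)%N -> c k `<=` c l.
  move=> /subnK <-; elim: (l - k)%N => [|m IH] //=.
  by rewrite addSn; apply: subset_trans IH (c_incr _).
pose U x := exists k, c k x.
have U_ideal : ideal U.
  split; first by exists 0%N; case: (c_ideal 0%N).
    move=> x y [k xk] [l yl]; exists (maxn k l); case: (c_ideal (maxn k l)) => _ cD _.
    by apply: cD; [apply: (c_mono k) xk; rewrite leq_maxl | apply: (c_mono l) yl; rewrite leq_maxr].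
  by move=> a x [k xk]; exists k; case: (c_ideal k) => _ _; apply.
have [t [tU tgen]] := R_noeth U_ideal.
have [kk tc] := choice (fun i : 'I_(size t) => tU _ (mem_nth 0 (ltn_ord i))).
exists (\max_i kk i)%N => x xc; have /tgen [a ->] : U x by exists (\max_i kk i).+1%N.
apply: ideal_sum => // i; apply: (c_mono (kk i)); [exact: leq_bigmax | exact: tc].
Qed.

Lemma noetherian_ind (P : set R -> Prop) :
  (forall J, ideal J -> (forall J', ideal J' -> J `<=` J' -> ~ J' `<=` J -> P J') -> P J) ->
  forall J, ideal J -> P J.
Proof.
move=> P_ind J0 J0_ideal; apply: contrapT => nP0.
have step J : exists J', ideal J /\ ~ P J ->
    [/\ ideal J', ~ P J', J `<=` J' & ~ J' `<=` J].
  have [[J_ideal nPJ]|] := pselect (ideal J /\ ~ P J); last by exists J.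
  apply: contrapT => no_step; apply: nPJ; apply: P_ind => // J' J'_ideal JJ' J'J.
  by apply: contrapT => nPJ'; apply: no_step; exists J'.
have [next next_spec] := choice step.
pose c k := iter k next J0.
have c_bad k : ideal (c k) /\ ~ P (c k).
  elim: k => [|k [ck_ideal nPk]]; first by [].
  by have [] := next_spec _ (conj ck_ideal nPk).
have c_incr k : c k `<=` c k.+1 by case: (next_spec _ (c_bad k)).
have [k ck] := noetherian_chain (fun k => (c_bad k).1) c_incr.
by case: (next_spec _ (c_bad k)).
Qed.

End NoetherianInduction.

Section IdealAdjoin.
Variables (R : comPzRingType) (J : set R) (a : R).
Hypothesis J_ideal : ideal J.

Definition ideal_adj := [set x | exists c r, J c /\ x = c + r * a].

Lemma ideal_adj_ideal : ideal ideal_adj.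
Proof.
case: J_ideal => J0 JD JM; split.
- by exists 0, 0; rewrite mul0r addr0.
- move=> x y [c [r [Jc ->]]] [c' [r' [Jc' ->]]]; exists (c + c'), (r + r').
  by split; [exact: JD | ring].
- move=> b x [c [r [Jc ->]]]; exists (b * c), (b * r).
  by split; [exact: JM | ring].
Qed.

Lemma ideal_adj_sub : J `<=` ideal_adj.
Proof. by move=> x Jx; exists x, 0; rewrite mul0r addr0. Qed.

Lemma ideal_adj_mem : ideal_adj a.
Proof. by case: J_ideal => J0 _ _; exists 0, 1; rewrite mul1r add0r. Qed.

Lemma ideal_adj_prime_sub (p : set R) : prime_ideal p -> J `<=` p -> p a -> ideal_adj `<=` p.
Proof.
move=> [[_ pD pM] _ _] Jp pa x [c [r [Jc ->]]].
by apply: pD; [exact: Jp | exact: pM].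
Qed.

End IdealAdjoin.

Lemma bigcap_prime_ideal (R : comPzRingType) (F : set (set R)) :
  F `<=` @prime_ideal R -> ideal (\bigcap_(q in F) q).
Proof.
move=> F_prime; split.
- by move=> q /F_prime [[]].
- move=> x y Fx Fy q Fq; case: (F_prime q Fq) => -[_ qD _] _ _.
  by apply: qD; [exact: Fx | exact: Fy].
- by move=> r x Fx q Fq; case: (F_prime q Fq) => -[_ _ qM] _ _; apply: qM; exact: Fx.
Qed.

Section DeltaCover.
Variables (R : comPzRingType) (M : lmodType R) (X : set (set R)) (S : set M).

Definition delta_cover (Y : set (set R)) := exists Lambda : set (set R),
  [/\ finite_set Lambda, Lambda `<=` X &
    forall p, Y p -> ~ Lambda p -> exists q, [/\ Lambda q, q `<` p & delta p S = delta q S]].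

Lemma delta_coverS Y Y' : Y' `<=` Y -> delta_cover Y -> delta_cover Y'.
Proof. by move=> Y'Y [L [L_fin LX L_cov]]; exists L; split => // p /Y'Y; apply: L_cov. Qed.

Lemma delta_cover0 : delta_cover set0.
Proof. by exists set0; split => //; exact: finite_set0. Qed.

Lemma delta_coverU Y1 Y2 : delta_cover Y1 -> delta_cover Y2 -> delta_cover (Y1 `|` Y2).
Proof.
move=> [L1 [L1_fin L1X L1_cov]] [L2 [L2_fin L2X L2_cov]].
exists (L1 `|` L2); split; first by rewrite finite_setU.
  by move=> q [/L1X|/L2X].
move=> p [Y1p|Y2p] nL.
  by have [q [? ? ?]] := L1_cov p Y1p (fun L1p => nL (or_introl L1p)); exists q; split => //; left.
by have [q [? ? ?]] := L2_cov p Y2p (fun L2p => nL (or_intror L2p)); exists q; split => //; right.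
Qed.

Lemma delta_cover_above (q : set R) (f : R) : X q ->
  (forall p, prime_ideal p -> ~ p f -> q `<=` p -> delta p S = delta q S) ->
  delta_cover [set p | [/\ prime_ideal p, q `<=` p & ~ p f]].
Proof.
move=> Xq q_const; exists [set q]; split; [exact: finite_set1 | by move=> _ -> |].
move=> p [p_prime qp f_out] pq; exists q; split => //; last exact: q_const.
by split => // pq'; apply: pq; apply/seteqP; split.
Qed.

Hypotheses (R_noeth : noetherian R) (M_fg : fin_gen_module M).
Hypotheses (X_prime : X `<=` @prime_ideal R) (X_basic : basic X).

Definition above (J : set R) := [set p | X p /\ J `<=` p].

Lemma above_adj J a : ideal J -> above J `&` [set p | p a] `<=` above (ideal_adj J a).
Proof.
move=> J_ideal p [[Xp Jp] pa]; split => //.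
exact: ideal_adj_prime_sub (X_prime Xp) Jp pa.
Qed.

Lemma delta_cover_above_ideal J : ideal J ->
  (forall J', ideal J' -> J `<=` J' -> ~ J' `<=` J -> delta_cover (above J')) ->
  delta_cover (above J).
Proof.
move=> J_ideal IH.
have [[p0 [Xp0 Jp0]]|no_prime] := pselect (exists p, above J p); last first.
  by apply: delta_coverS delta_cover0 => p Jp; apply: no_prime; exists p.
pose K := \bigcap_(q in above J) q.
have JK : J `<=` K by move=> x Jx q [_ Jq]; exact: Jq.
have IH_adj a : ~ K a -> delta_cover (above (ideal_adj J a)).
  move=> Ka; apply: IH; [exact: ideal_adj_ideal | exact: ideal_adj_sub |].
  by move=> /(_ a (ideal_adj_mem a J_ideal)) /JK.
have [K_prime|K_not_prime] := pselect (prime_ideal K).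
  have XK : X K by apply: X_basic => // q [].
  have [f [f_out f_const]] := delta_locally_constant S R_noeth M_fg K_prime.
  apply: delta_coverS (delta_coverU (IH_adj f f_out) (delta_cover_above XK f_const)).
  move=> p [Xp Jp]; have [pf|pf] := pselect (p f); first by left; exact: above_adj.
  by right; split => //; [exact: X_prime | move=> x Kx; exact: Kx].
have [a [b [Kab Ka Kb]]] : exists a b, [/\ K (a * b), ~ K a & ~ K b].
  apply: contrapT => no_ab; apply: K_not_prime; split.
  - by apply: bigcap_prime_ideal => q [/X_prime].
  - by move=> K1; case: (X_prime Xp0) => _ p1 _; apply: p1; apply: (K1 p0).
  move=> x y Kxy; apply: contrapT => /not_orP [Kx Ky]; apply: no_ab; by exists x, y.
apply: delta_coverS (delta_coverU (IH_adj a Ka) (IH_adj b Kb)) => p [Xp Jp].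
have [_ _ /(_ _ _ (Kab p (conj Xp Jp))) [pa|pb]] := X_prime Xp.
  by left; exact: above_adj.
by right; exact: above_adj.
Qed.

Lemma delta_cover_all : delta_cover X.
Proof.
have zero_ideal : ideal [set 0 : R].
  by split => // [x y -> ->|r x ->]; rewrite ?addr0 ?mulr0.
apply: delta_coverS (noetherian_ind R_noeth delta_cover_above_ideal zero_ideal).
by move=> p Xp; split => // x ->; exact: prime_ideal0 (X_prime Xp).
Qed.

End DeltaCover.

Unset Implicit Arguments.

Theorem lemma3p6 (R : comPzRingType) (M : lmodType R)
    (HR : noetherian R) (HM : fin_gen_module M)
    (X : set (set R)) (HXspec : X `<=` @prime_ideal R) (HX : basic X)
    (S : set M) :
  exists Lambda : set (set R),
    [/\ finite_set Lambda, Lambda `<=` X &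
      forall p, X p -> ~ Lambda p ->
        exists q, [/\ Lambda q, q `<` p & delta p S = delta q S]].
Proof. exact: delta_cover_all HR HM HXspec HX. Qed.
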